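(* Let $n\ge 1$, $k\ge 1$ be integers, let $\lambda\in\mathbb{F}_{2^n}^*$, and let $f:\mathbb{F}_{2^n}\to\mathbb{F}_2$ be given by $f(x)=Tr(\lambda x^{2^k+1})$. Then $f$ is negabent if and only if the polynomial $P(x)=\lambda^{2^{n-k}}x^{2^{n-k}}+\lambda x^{2^k}+x$ is a permutation polynomial of $\mathbb{F}_{2^n}$.
   Context: $Tr=Tr_1^n:\mathbb{F}_{2^n}\to\mathbb{F}_2$ is the absolute trace, $Tr(x)=x+x^2+\dots+x^{2^{n-1}}$. Fix a self-dual basis $\{\alpha_1,\dots,\alpha_n\}$ of $\mathbb{F}_{2^n}$ over $\mathbb{F}_2$ (i.e. $Tr(\alpha_i\alpha_j)=\delta_{ij}$) and identify $x=\sum x_i\alpha_i$ with $(x_1,\dots,x_n)\in\mathbb{F}_2^n$; let $wt(x)$ be the number of nonzero coordinates $x_i$. For $f:\mathbb{F}_{2^n}\to\mathbb{F}_2$ the nega-Hadamard transform is $\mathcal{N}_f(\mu)=2^{-n/2}\sum_{x}(-1)^{f(x)+Tr(\mu x)}\,\mathrm{i}^{wt(x)}$ with $\mathrm{i}=\sqrt{-1}$, and $f$ is negabent if $|\mathcal{N}_f(\mu)|=1$ for all $\mu\in\mathbb{F}_{2^n}$. *)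

From HB Require Import structures.
From mathcomp Require Import all_boot all_order all_algebra all_field.
Set Implicit Arguments. Unset Strict Implicit. Unset Printing Implicit Defensive.
Import Order.TTheory GRing.Theory Num.Theory.
Local Open Scope ring_scope.

(* Absolute trace Tr_1^n : F_{2^n} -> F_2, valued in the prime subfield of F. *)
Definition Tr (F : finFieldType) (n : nat) (x : F) : F :=
  \sum_(i < n) x ^+ (2 ^ i).

Definition self_dual (F : finFieldType) (n : nat) (a : 'I_n -> F) : Prop :=
  forall i j : 'I_n, Tr n (a i * a j) = (i == j)%:R.

Definition elt_of (F : finFieldType) (n : nat) (a : 'I_n -> F)
  (c : {ffun 'I_n -> bool}) : F := \sum_(i < n) (c i)%:R * a i.

Definition wt (n : nat) (c : {ffun 'I_n -> bool}) : nat := #|[set i | c i]|.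

Definition sgn (F : finFieldType) (y : F) : algC := if y == 0 then 1 else -1.

(* Nega-Hadamard transform, summing over x identified with (x_1..x_n). *)
Definition negaH (F : finFieldType) (n : nat) (a : 'I_n -> F) (f : F -> F)
  (mu : F) : algC :=
  (sqrtC (2 ^+ n))^-1 *
  \sum_(c : {ffun 'I_n -> bool})
     sgn (f (elt_of a c) + Tr n (mu * elt_of a c)) * 'i ^+ (wt c).

Definition negabent (F : finFieldType) (n : nat) (a : 'I_n -> F) (f : F -> F)
  : Prop := forall mu : F, `|negaH a f mu| = 1.

Definition perm_poly (F : finFieldType) (p : {poly F}) : Prop :=
  bijective (fun x : F => p.[x]).

From HB Require Import structures.
From mathcomp Require Import all_boot all_order all_algebra all_field.
From mathcomp Require Import ring zify.
Import Order.TTheory GRing.Theory Num.Theory.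
Local Open Scope ring_scope.

Set Implicit Arguments. Unset Strict Implicit. Unset Printing Implicit Defensive.

(* Squaring the nega-Hadamard transform and substituting y = x + z gives
   |N_f(mu)|^2 = 2^-n sum_z (-i)^wt(z) sum_x (-1)^(f x + f (x+z) + Tr(x z) + Tr(mu z)),
   where (-1)^Tr(x z) comes from i^wt(x) (-i)^wt(x+z) thanks to the self-dual basis.
   For f x = Tr(lam x^(2^k+1)) the exponent is Tr(x P(z)) + f z + Tr(mu z), so the
   inner sum vanishes unless P(z) = 0: |N_f|^2 is the Fourier transform of a function
   supported on ker P and nonzero there. It is constantly 1 iff that function is the
   Dirac mass at 0, i.e. iff ker P = 0, i.e. iff the additive map P permutes F. *)

Definition xorf n (c e : {ffun 'I_n -> bool}) : {ffun 'I_n -> bool} :=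
  [ffun i => c i (+) e i].

Lemma xorfK n (c : {ffun 'I_n -> bool}) : involutive (xorf c).
Proof. by move=> e; apply/ffunP => i; rewrite !ffunE addKb. Qed.

Lemma expr_wt (R : pzSemiRingType) n (c : {ffun 'I_n -> bool}) (x : R) :
  x ^+ wt c = \prod_j (if c j then x else 1).
Proof. by rewrite -big_mkcond /= prodr_const /wt cardsE. Qed.

Lemma wt_xorf_sign n (c e : {ffun 'I_n -> bool}) :
  'i ^+ wt c * (- 'i) ^+ wt (xorf c e) =
  (- 'i) ^+ wt e * \prod_j (if c j && e j then -1 else 1) :> algC.
Proof.
rewrite !expr_wt -!big_split /=; apply: eq_bigr => j _.
rewrite ffunE; case: (c j); case: (e j) => /=; rewrite ?mulr1 ?mul1r //.
- by rewrite mulrN1 opprK.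
- by rewrite mulrN -expr2 sqrCi opprK.
Qed.

Definition trchar (F : finFieldType) n (y : F) : algC := sgn (Tr n y).

Section FiniteFieldOfOrder2n.

Variables (F : finFieldType) (n : nat).
Hypothesis cardF : #|F| = (2 ^ n)%N.

Lemma pchar2 : 2 \in [pchar F].
Proof. exact: card_finPcharP cardF (isT : prime 2). Qed.

Lemma n_gt0 : (0 < n)%N.
Proof. by have := card_finNzRing_gt1 F; rewrite cardF; case: n. Qed.

Lemma exprD_exp2 j (x y : F) : (x + y) ^+ (2 ^ j) = x ^+ (2 ^ j) + y ^+ (2 ^ j).
Proof. by apply: exprDn_pchar; rewrite pnatX (pnatE _ (isT : prime 2)) pchar2. Qed.

Lemma expr_2n (x : F) : x ^+ (2 ^ n) = x.
Proof. by rewrite -cardF expf_card. Qed.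

Lemma expr_card_exp j (x : F) : x ^+ ((2 ^ n) ^ j) = x.
Proof.
elim: j => [|j IH]; first by rewrite expr1.
by rewrite expnSr exprM IH expr_2n.
Qed.

Lemma Tr0 : Tr n (0 : F) = 0.
Proof. by rewrite /Tr big1 // => i _; rewrite expr0n expn_eq0. Qed.

Lemma TrD (x y : F) : Tr n (x + y) = Tr n x + Tr n y.
Proof. by rewrite /Tr -big_split; apply: eq_bigr => i _; rewrite exprD_exp2. Qed.

Lemma Tr_sum (I : finType) (P : pred I) (g : I -> F) :
  Tr n (\sum_(i | P i) g i) = \sum_(i | P i) Tr n (g i).
Proof. exact: (big_morph (Tr n) TrD Tr0). Qed.

Lemma Tr_sqr (x : F) : Tr n (x ^+ 2) = Tr n x.
Proof.
rewrite /Tr -(prednK n_gt0) big_ord_recr big_ord_recl /= -exprM -expnS.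
rewrite prednK ?n_gt0 // expr_2n expn0 expr1 addrC; congr (_ + _).
by apply: eq_bigr => i _; rewrite -exprM -expnS.
Qed.

Lemma Tr_exp2 j (x : F) : Tr n (x ^+ (2 ^ j)) = Tr n x.
Proof.
elim: j => [|j IH]; first by rewrite expr1.
by rewrite expnSr exprM Tr_sqr.
Qed.

Lemma Tr01 (x : F) : Tr n x = 0 \/ Tr n x = 1.
Proof.
have Tr_idem : Tr n x ^+ 2 = Tr n x.
  rewrite -[RHS]Tr_sqr /Tr (big_morph (fun y : F => y ^+ 2) (exprD_exp2 1) (expr0n _ 2)).
  by apply: eq_bigr => i _; rewrite -!exprM mulnC.
have : Tr n x * (Tr n x - 1) == 0 by rewrite mulrBr mulr1 -expr2 Tr_idem subrr.
by rewrite mulf_eq0 subr_eq0 => /orP [/eqP ->|/eqP ->]; [left|right].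
Qed.

Lemma size_Tr_poly : size (\sum_(i < n) 'X^(2 ^ i) : {poly F}) = (2 ^ n.-1).+1.
Proof.
rewrite -[in LHS](prednK n_gt0) big_ord_recr /= addrC size_polyDl size_polyXn //.
apply: leq_ltn_trans (size_sum _ _ _) _; rewrite ltnS.
apply/bigmax_leqP => i _; rewrite size_polyXn.
by rewrite (ltn_exp2l _ _ (isT : (1 < 2)%N)) ltn_ord.
Qed.

Lemma exists_Tr1 : exists x : F, Tr n x = 1.
Proof.
case: (pickP (fun x : F => Tr n x == 1)) => [x /eqP|Tr_ne1]; first by exists x.
have TrP_root (x : F) : root (\sum_(i < n) 'X^(2 ^ i)) x.
  rewrite /root horner_sum; under eq_bigr => i _ do rewrite hornerXn.
  by rewrite -/(Tr n x); case: (Tr01 x) (Tr_ne1 x) => ->; rewrite ?eqxx.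
have TrP_neq0 : \sum_(i < n) 'X^(2 ^ i) != 0 :> {poly F}.
  by rewrite -size_poly_eq0 size_Tr_poly.
have := max_poly_roots TrP_neq0 (introT allP (fun x _ => TrP_root x)) (enum_uniq F).
rewrite -cardE cardF size_Tr_poly ltnS -[in X in (X <= _)%N](prednK n_gt0) expnS.
have : (0 < 2 ^ n.-1)%N by rewrite expn_gt0.
lia.
Qed.

Lemma trchar0 : trchar n (0 : F) = 1.
Proof. by rewrite /trchar Tr0 /sgn eqxx. Qed.

Lemma trchar_sign (x : F) : trchar n x = 1 \/ trchar n x = -1.
Proof.
by rewrite /trchar /sgn; case: (Tr01 x) => ->; rewrite ?eqxx ?oner_eq0; [left|right].
Qed.

Lemma trcharD (x y : F) : trchar n (x + y) = trchar n x * trchar n y.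
Proof.
rewrite /trchar /sgn TrD.
case: (Tr01 x) => ->; case: (Tr01 y) => ->;
  rewrite ?addr0 ?add0r ?(addrr_pchar2 pchar2) ?eqxx ?oner_eq0 /=;
  by rewrite ?mulrNN ?mulr1 ?mul1r.
Qed.

Lemma trchar_sum (I : finType) (P : pred I) (g : I -> F) :
  trchar n (\sum_(i | P i) g i) = \prod_(i | P i) trchar n (g i).
Proof. exact: (big_morph (trchar n) trcharD trchar0). Qed.

Lemma trchar_neq0 (x : F) : trchar n x != 0.
Proof. by case: (trchar_sign x) => ->; rewrite ?oppr_eq0 oner_eq0. Qed.

Lemma conj_trchar (x : F) : (trchar n x)^* = trchar n x.
Proof. by case: (trchar_sign x) => ->; rewrite ?rmorphN rmorph1. Qed.

Lemma sum_trchar_mul (w : F) :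
  \sum_(x : F) trchar n (x * w) = if w == 0 then (2 ^ n)%:R else 0.
Proof.
case: eqP => [->|/eqP w_neq0].
  under eq_bigr => x _ do rewrite mulr0 trchar0.
  by rewrite sumr_const cardT -cardE cardF.
have [x0 Trx0] := exists_Tr1.
set S := \sum_(x : F) _.
have S_opp : S = - S.
  rewrite {1}/S (reindex_inj (addIr (x0 / w))) -sumrN; apply: eq_bigr => x _.
  by rewrite mulrDl trcharD divfK // /trchar Trx0 /sgn oner_eq0 mulrN1.
have : S * 2 == 0 by rewrite mulrDr mulr1 {1}S_opp addNr.
by rewrite mulf_eq0 pnatr_eq0 orbF => /eqP.
Qed.

Lemma trchar_fourier_inversion (I : finType) (E : I -> F) (w : I -> algC) j :
  injective E ->
  \sum_(mu : F) (\sum_i w i * trchar n (mu * E i)) * trchar n (mu * E j)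
  = (2 ^ n)%:R * w j.
Proof.
move=> E_inj.
under eq_bigr => mu _ do rewrite mulr_suml.
rewrite exchange_big /=.
under eq_bigr => i _ do
  under eq_bigr => mu _ do rewrite -mulrA -trcharD -mulrDr.
under eq_bigr => i _ do
  rewrite -mulr_sumr sum_trchar_mul addr_eq0 (oppr_pchar2 pchar2) (inj_eq E_inj).
rewrite (bigD1 j) //= eqxx big1 => [|i /negbTE ->]; last by rewrite mulr0.
by rewrite addr0 mulrC.
Qed.

Lemma trchar_fourier_eq1 (I : finType) (E : I -> F) (w : I -> algC) i0 :
  injective E -> E i0 = 0 ->
  (forall mu, \sum_i w i * trchar n (mu * E i) = 1) <->
  (forall i, w i = (i == i0)%:R).
Proof.
move=> E_inj Ei0; split=> [w_hat1 i | w_delta mu].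
  have := trchar_fourier_inversion w i E_inj.
  under eq_bigr => mu _ do rewrite w_hat1 mul1r.
  rewrite sum_trchar_mul -Ei0 (inj_eq E_inj) => w_i.
  apply: (@mulfI _ (2 ^ n)%:R); first by rewrite pnatr_eq0 expn_eq0.
  by rewrite -w_i; case: (i == i0); rewrite ?mulr1 ?mulr0.
rewrite (bigD1 i0) //= big1 ?addr0 => [|i ii0].
  by rewrite w_delta eqxx Ei0 mulr0 trchar0 mulr1.
by rewrite w_delta (negbTE ii0) mul0r.
Qed.

Lemma exp2_adj_expr k (x : F) : x ^+ (2 ^ (k + (n - k %% n))) = x.
Proof.
have -> : (k + (n - k %% n) = n * (k %/ n).+1)%N.
  by have := ltn_pmod k n_gt0; have := divn_eq k n; lia.
by rewrite expnM expr_card_exp.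
Qed.

Lemma Tr_mul_exp2_adj k (lam x z : F) :
  Tr n (lam * x ^+ (2 ^ k) * z) =
  Tr n (x * (lam ^+ (2 ^ (n - k %% n)) * z ^+ (2 ^ (n - k %% n)))).
Proof.
rewrite -(Tr_exp2 (n - k %% n)) !exprMn -exprM -expnD exp2_adj_expr.
by rewrite mulrCA mulrA.
Qed.

Definition linP k (lam z : F) : F :=
  lam ^+ (2 ^ (n - k %% n)) * z ^+ (2 ^ (n - k %% n)) + lam * z ^+ (2 ^ k) + z.

Lemma linP0 k lam : linP k lam 0 = 0.
Proof. by rewrite /linP !expr0n !expn_eq0 /= !mulr0 !addr0. Qed.

Lemma linPD k lam : {morph linP k lam : x y / x + y}.
Proof. by move=> x y; rewrite /linP !exprD_exp2; ring. Qed.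

Lemma Tr_gold_autocorr k (lam mu x z : F) :
  Tr n (lam * x ^+ (2 ^ k + 1) + mu * x
        + (lam * (x + z) ^+ (2 ^ k + 1) + mu * (x + z)) + x * z) =
  Tr n (x * linP k lam z + (lam * z ^+ (2 ^ k + 1) + mu * z)).
Proof.
rewrite !exprD !expr1 exprD_exp2 /linP.
set u := x ^+ (2 ^ k); set v := z ^+ (2 ^ k).
set L := lam ^+ _; set M := z ^+ _.
have -> : lam * (u * x) + mu * x + (lam * ((u + v) * (x + z)) + mu * (x + z)) + x * z =
  x * (L * M + lam * v + z) + (lam * (v * z) + mu * z) + (lam * u * z + x * (L * M))
  + 2%:R * (lam * (u * x) + mu * x - x * (L * M)) by ring.
rewrite (pcharf0 pchar2) mul0r addr0 !TrD Tr_mul_exp2_adj -/u -/L -/M.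
by rewrite -addrA (addrr_pchar2 pchar2) addr0.
Qed.

Lemma linP_injE k lam :
  injective (linP k lam) <-> (forall z, linP k lam z = 0 -> z = 0).
Proof.
split=> [P_inj z Pz | ker0 x y Pxy]; first by apply: P_inj; rewrite Pz linP0.
apply/eqP; rewrite -(oppr_pchar2 pchar2 y) -addr_eq0; apply/eqP/ker0.
by rewrite linPD Pxy (addrr_pchar2 pchar2).
Qed.

Section SelfDualBasis.

Variable a : 'I_n -> F.
Local Notation E := (elt_of a).

Lemma elt_of0 : E [ffun => false] = 0.
Proof. by rewrite /elt_of big1 // => i _; rewrite ffunE mul0r. Qed.

Lemma elt_of_xorf c e : E (xorf c e) = E c + E e.
Proof.
rewrite /elt_of -big_split /=; apply: eq_bigr => i _.
rewrite ffunE -mulrDl; congr (_ * _).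
by case: (c i); case: (e i); rewrite /= ?addr0 ?add0r ?(addrr_pchar2 pchar2).
Qed.

Hypothesis a_self_dual : self_dual a.

Lemma Tr_basis_mul_elt j c : Tr n (a j * E c) = (c j)%:R.
Proof.
rewrite /elt_of mulr_sumr Tr_sum (bigD1 j) //= big1 => [|i ij].
  by rewrite addr0 mulrCA; case: (c j); rewrite ?mul1r ?mul0r ?Tr0 ?a_self_dual ?eqxx.
rewrite mulrCA; case: (c i); rewrite ?mul1r ?mul0r ?Tr0 //.
by rewrite a_self_dual eq_sym (negbTE ij).
Qed.

Lemma elt_of_inj : injective E.
Proof.
move=> c d Ecd; apply/ffunP => j.
have := Tr_basis_mul_elt j c; rewrite Ecd Tr_basis_mul_elt.
by case: (c j); case: (d j) => // /eqP; rewrite ?oner_eq0 // eq_sym oner_eq0.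
Qed.

Lemma elt_of_bij : bijective E.
Proof.
by apply: inj_card_bij elt_of_inj _; rewrite card_ffun card_bool card_ord cardF.
Qed.

Lemma sum_elt_of (G : F -> algC) : \sum_c G (E c) = \sum_x G x.
Proof. by rewrite (reindex E (onW_bij _ elt_of_bij)). Qed.

Lemma trchar_elt_mul c e :
  trchar n (E c * E e) = \prod_j (if c j && e j then -1 else 1).
Proof.
rewrite {1}/elt_of mulr_suml trchar_sum; apply: eq_bigr => j _.
rewrite -mulrA /trchar /sgn; case: (c j); rewrite ?mul1r ?mul0r ?Tr0 ?Tr_basis_mul_elt;
  by case: (e j); rewrite /= ?eqxx ?oner_eq0.
Qed.

Lemma sqr_norm_nega_sum (g : F -> F) :
  `|\sum_c trchar n (g (E c)) * 'i ^+ wt c| ^+ 2 =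
  \sum_e (- 'i) ^+ wt e *
    \sum_c trchar n (g (E c) + g (E c + E e) + E c * E e).
Proof.
rewrite normCK rmorph_sum mulr_suml.
under eq_bigr => c _ do rewrite mulr_sumr (reindex_inj (inv_inj (xorfK c))).
rewrite exchange_big; apply: eq_bigr => e _; rewrite mulr_sumr; apply: eq_bigr => c _.
rewrite rmorphM /= conj_trchar rmorphXn /= conjCi elt_of_xorf.
rewrite mulrACA wt_xorf_sign !trcharD trchar_elt_mul.
by rewrite mulrCA !mulrA.
Qed.

Definition kernel_weight k lam (e : {ffun 'I_n -> bool}) : algC :=
  if linP k lam (E e) == 0
  then (- 'i) ^+ wt e * trchar n (lam * E e ^+ (2 ^ k + 1)) else 0.

Lemma sqr_norm_negaH_gold k lam mu :
  `|negaH a (fun x => Tr n (lam * x ^+ (2 ^ k + 1))) mu| ^+ 2 =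
  \sum_e kernel_weight k lam e * trchar n (mu * E e).
Proof.
have two_n_neq0 : (2 ^ n)%:R != 0 :> algC by rewrite pnatr_eq0 expn_eq0.
rewrite /negaH normrM exprMn normfV [`|sqrtC _|]ger0_norm ?sqrtC_ge0 ?exprn_ge0 //.
rewrite exprVn sqrtCK -natrX.
under eq_bigr => c _ do rewrite -TrD -/(trchar n _).
rewrite (sqr_norm_nega_sum (fun y => lam * y ^+ (2 ^ k + 1) + mu * y)) mulr_sumr.
apply: eq_bigr => e _.
under eq_bigr => c _ do rewrite /trchar Tr_gold_autocorr -/(trchar n _) trcharD.
rewrite -mulr_suml (sum_elt_of (fun x => trchar n (x * _))).
rewrite sum_trchar_mul /kernel_weight; case: eqP => _; last by rewrite !(mul0r, mulr0).
by rewrite mulrCA mulKf // trcharD mulrA.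
Qed.

Lemma kernel_weight_delta k lam :
  (forall e, kernel_weight k lam e = (e == [ffun => false])%:R) <->
  (forall z, linP k lam z = 0 -> z = 0).
Proof.
have E0_inj e : (E e == 0) = (e == [ffun => false]).
  by rewrite -elt_of0 (inj_eq elt_of_inj).
split=> [kernel_weight_eq z Pz | ker0 e].
  have [Einv EK EinvK] := elt_of_bij; rewrite -(EinvK z) in Pz *.
  apply/eqP; rewrite E0_inj; apply/negPn/negP => /negbTE e_neq0.
  move: (kernel_weight_eq (Einv z)); rewrite /kernel_weight Pz eqxx e_neq0 => /eqP.
  rewrite mulf_eq0 (negbTE (trchar_neq0 _)) expf_eq0 oppr_eq0.
  by rewrite (negbTE (neq0Ci _)) andbF.
rewrite /kernel_weight -E0_inj; have [Ee0 | Ee_neq0] := eqVneq (E e) 0.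
  have -> : e = [ffun => false] by apply: elt_of_inj; rewrite Ee0 elt_of0.
  rewrite elt_of0 linP0 eqxx addn1 exprS !mul0r mulr0 trchar0 mulr1 expr_wt.
  by rewrite big1 // => j _; rewrite ffunE.
by case: eqP => // /ker0 /eqP; rewrite (negbTE Ee_neq0).
Qed.

End SelfDualBasis.
End FiniteFieldOfOrder2n.

Theorem proposition3 (n k : nat) (F : finFieldType) (a : 'I_n -> F)
  (lam : F) :
  (1 <= n)%N -> (1 <= k)%N -> #|F| = (2 ^ n)%N -> self_dual a ->
  lam != 0 ->
  negabent a (fun x => Tr n (lam * x ^+ (2 ^ k + 1))) <->
  perm_poly (lam ^+ (2 ^ (n - k %% n)) *: 'X^(2 ^ (n - k %% n))
             + lam *: 'X^(2 ^ k) + 'X).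
Proof.
move=> _ _ cardF a_self_dual _.
have negabentE : negabent a (fun x => Tr n (lam * x ^+ (2 ^ k + 1))) <->
    forall mu, \sum_e kernel_weight a k lam e * trchar n (mu * elt_of a e) = 1.
  split=> [negabent_f mu | kernel_weight_hat1 mu].
    by rewrite -(sqr_norm_negaH_gold cardF a_self_dual) negabent_f expr1n.
  apply/eqP; rewrite -sqrp_eq1 ?normr_ge0 //.
  by rewrite (sqr_norm_negaH_gold cardF a_self_dual) kernel_weight_hat1.
rewrite negabentE.
rewrite (trchar_fourier_eq1 cardF _ (elt_of_inj cardF a_self_dual) (elt_of0 a)).
rewrite (kernel_weight_delta cardF a_self_dual) -(linP_injE cardF) /perm_poly.
set P := (_ + _ + _ : {poly F}).
have horner_P : linP n k lam =1 horner P by move=> z; rewrite /P !hornerE.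
split=> [/injF_bij P_bij | /bij_inj P_inj]; first exact: (eq_bij P_bij horner_P).
by apply: eq_inj P_inj _ => z; rewrite horner_P.
Qed.
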